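(* Let $G=(V,E)$ be a graph with a partition $(V_1,V_2)$ of $V$ such that $G[V_1]$ and $G[V_2]$ are $P_5$-free, and let $k$ be an integer. Suppose that $k\ge 1$, that $G$ contains a $P_5$, that every vertex of $G$ lies on some $P_5$ in $G$, and that every $P_5$ in $G$ contains at least $4$ vertices of $V_2$. Let $v\in V_2$ be an isolated vertex of $G[V_2]$, and let $F\subseteq V_2$ be a set such that $G\setminus F$ is $P_5$-free and $v\in F$. Then there exists a set $F'\subseteq V_2$ such that $G\setminus F'$ is $P_5$-free, $v\notin F'$, and $|F'|\le |F|$.
   Context: Graphs are finite, simple and undirected. A $P_5$ is a path on $5$ vertices (as a not necessarily induced subgraph); a graph is $P_5$-free if it contains no $P_5$. $G[X]$ denotes the subgraph induced by $X$, and $G\setminus F=G[V\setminus F]$. *)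

From mathcomp Require Import all_boot.
Set Implicit Arguments. Unset Strict Implicit. Unset Printing Implicit Defensive.

(* A finite simple graph: vertex set a finType T, adjacency e : rel T that is
   symmetric and irreflexive (these are hypotheses of the theorem). *)

(* p is a (not necessarily induced) path on 5 distinct vertices in the graph
   with adjacency e: p = [:: x1; x2; x3; x4; x5], x_i pairwise distinct,
   x_i adjacent to x_(i+1). *)
Definition is_P5 (T : eqType) (e : rel T) (p : seq T) : bool :=
  [&& size p == 5, uniq p &
      (if p is x :: s then path e x s else false)].

Definition P5_free_in (T : finType) (e : rel T) (X : {set T}) : Prop :=
  forall p : seq T, is_P5 e p -> ~ {subset p <= X}.

From mathcomp Require Import all_boot.
From mathcomp Require Import zify.
From Stdlib Require Import Classical.
Set Implicit Arguments. Unset Strict Implicit.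

(* A vertex v of V2 without neighbours in V2 can only be an end of a P5, and
   then the P5 reads v a b c d with a outside V2.  Two such P5s v a b c d and
   v a' x y z have a = a', for otherwise c b a v a' would be a P5 with two
   vertices outside V2.  Hence if some P5 avoids F :\ v, it passes through v,
   say v a b c d, and then deleting b |: F :\ v works: a P5 v a x y z avoiding
   it would give the P5 b a x y z avoiding F. *)

Section P5Basics.
Variables (T : eqType) (e : rel T).

Lemma is_P5E x1 x2 x3 x4 x5 :
  is_P5 e [:: x1; x2; x3; x4; x5] =
  [&& uniq [:: x1; x2; x3; x4; x5], e x1 x2, e x2 x3, e x3 x4 & e x4 x5].
Proof. by rewrite /is_P5 /= !andbT. Qed.

Lemma is_P5_size5 p :
  is_P5 e p -> exists x1 x2 x3 x4 x5, p = [:: x1; x2; x3; x4; x5].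
Proof.
by case/and3P; case: p => [|x1 [|x2 [|x3 [|x4 [|x5 [|? ?]]]]]] //= *; exists x1, x2, x3, x4, x5.
Qed.

Lemma is_P5_swap_head u b s :
  is_P5 e (u :: s) -> b \notin s -> e b (head b s) -> is_P5 e (b :: s).
Proof.
case/and3P=> size_s /andP[_ uniq_s].
case: s size_s uniq_s => //= y s size_s uniq_s /andP[_ path_s] bs eby.
by rewrite /is_P5 /= size_s bs uniq_s eby path_s.
Qed.

Lemma is_P5_rev (e_sym : symmetric e) p : is_P5 e p -> is_P5 e (rev p).
Proof.
move=> Pp; have [x1 [x2 [x3 [x4 [x5 Ep]]]]] := is_P5_size5 Pp; move: Pp.
rewrite Ep /rev /= !is_P5E => /and5P[uniq_p e12 e23 e34 e45].
have: uniq (rev [:: x1; x2; x3; x4; x5]) by rewrite rev_uniq.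
by rewrite /rev /= => ->; rewrite (e_sym x5 x4) (e_sym x4 x3) (e_sym x3 x2) (e_sym x2 x1) e12 e23 e34 e45.
Qed.

End P5Basics.

Section P5Free.
Variables (T : finType) (e : rel T).

Lemma P5_free_witness X :
  ~ P5_free_in e X -> exists p, is_P5 e p /\ {subset p <= X}.
Proof.
move=> notfree; apply: NNPP => nop; apply: notfree => p Pp pX.
by apply: nop; exists p.
Qed.

Lemma P5_free_setD1_mem F v p :
  P5_free_in e (~: F) -> is_P5 e p -> {subset p <= ~: (F :\ v)} -> v \in p.
Proof.
move=> freeF Pp pFv; apply/negPn/negP => vp; apply: (freeF p Pp) => x xp.
have := pFv x xp; rewrite !inE negb_and negbK => /orP[/eqP xv|//].
by rewrite -xv xp in vp.
Qed.

End P5Free.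

Section IsolatedVertex.
Variables (T : finType) (e : rel T) (e_sym : symmetric e) (S : {set T}).
Hypothesis S_heavy : forall p, is_P5 e p -> 4 <= count (fun x => x \in S) p.

Lemma heavy_P5_outside_eq p x y :
  is_P5 e p -> x \in p -> y \in p -> x \notin S -> y \notin S -> x = y.
Proof.
move=> Pp xp yp xS yS; apply/eqP; apply: contraT => xy.
have two_out : 2 <= count (predC (fun x => x \in S)) p.
  rewrite -size_filter; apply: (@uniq_leq_size _ [:: x; y]); first by rewrite /= inE xy.
  by move=> w; rewrite !inE mem_filter => /orP[] /eqP->; rewrite /= ?xS ?yS.
have := count_predC (fun x => x \in S) p; have := S_heavy Pp.
by case/and3P: Pp => /eqP-> _ _; lia.
Qed.

Variables (v : T) (v_isolated : forall u, u \in S -> ~~ e v u).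

Lemma isolated_neighbour_outside u : e v u -> u \notin S.
Proof. by apply: contraL => /v_isolated. Qed.

Lemma P5_isolated_end p :
  is_P5 e p -> v \in p ->
  exists a b c d, is_P5 e [:: v; a; b; c; d] /\ p =i [:: v; a; b; c; d].
Proof.
move=> Pp vp; have [x1 [x2 [x3 [x4 [x5 Ep]]]]] := is_P5_size5 Pp.
move: (Pp); rewrite {1}Ep is_P5E => /and5P[uniq_p e12 e23 e34 e45].
have inner_false u w : e u v -> e v w -> u != w -> u \in p -> w \in p -> False.
  move=> euv evw /eqP uw up wp; apply: uw; rewrite e_sym in euv.
  exact: heavy_P5_outside_eq Pp up wp (isolated_neighbour_outside euv) (isolated_neighbour_outside evw).
move: uniq_p; rewrite /= !inE !negb_or -!andbA.
case/and5P=> _ x13 _ _ /and5P[_ x24 _ _ /andP[x35 _]].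
move: vp; rewrite Ep !inE; case/or4P=> [||| /orP[]] /eqP vE; subst v.
- by exists x2, x3, x4, x5; rewrite -Ep.
- by case: (inner_false _ _ e12 e23 x13); rewrite Ep !inE eqxx ?orbT.
- by case: (inner_false _ _ e23 e34 x24); rewrite Ep !inE eqxx ?orbT.
- by case: (inner_false _ _ e34 e45 x35); rewrite Ep !inE eqxx ?orbT.
- exists x4, x3, x2, x1; split; first by have := is_P5_rev e_sym Pp; rewrite Ep.
  by move=> w; rewrite -mem_rev.
Qed.

Lemma P5_isolated_shape a b c d :
  is_P5 e [:: v; a; b; c; d] -> [/\ a \notin S, b \in S, c \in S & d \in S].
Proof.
move=> P; move: (P); rewrite is_P5E => /and5P[uniq_p eva _ _ _].
have aS := isolated_neighbour_outside eva.
have tail_in x : x \in [:: b; c; d] -> x \in S.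
  move=> xs; apply: contraT => xS.
  have xa : x = a.
    by apply: heavy_P5_outside_eq P _ _ xS aS; rewrite 2!in_cons ?xs ?orbT // !inE eqxx orbT.
  by move: uniq_p; rewrite -xa /= xs andbF.
by split; rewrite // tail_in // !inE eqxx ?orbT.
Qed.

Lemma P5_isolated_neighbour_eq a b c d a' x y z :
  is_P5 e [:: v; a; b; c; d] -> is_P5 e [:: v; a'; x; y; z] -> a' = a.
Proof.
move=> P Q; have [aS bS cS _] := P5_isolated_shape P.
have [a'S _ _ _] := P5_isolated_shape Q.
case: (eqVneq a' a) => // a'a; exfalso.
have a'_new : a' \notin [:: v; a; b; c].
  have ne_in u : u \in S -> (a' == u) = false by move=> uS; apply: contraNF a'S => /eqP->.
  have a'v : (a' == v) = false.
    by case/and3P: Q => _ /andP[]; rewrite in_cons negb_or eq_sym => /andP[/negbTE].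
  by rewrite !inE a'v (negbTE a'a) !ne_in.
have P' : is_P5 e [:: a'; v; a; b; c].
  move: P Q; rewrite !is_P5E => /and5P[uniq_p -> -> -> _] /and5P[_ eva' _ _ _].
  by rewrite cons_uniq a'_new (take_uniq 4 uniq_p) e_sym eva'.
move/eqP: a'a; apply; apply: heavy_P5_outside_eq P' _ _ a'S aS; by rewrite !inE eqxx ?orbT.
Qed.

Lemma P5_free_isolated_swap (F : {set T}) a b c d :
  P5_free_in e (~: F) -> is_P5 e [:: v; a; b; c; d] ->
  {subset [:: v; a; b; c; d] <= ~: (F :\ v)} -> P5_free_in e (~: (b |: F :\ v)).
Proof.
move=> freeF P pFv q Pq qF'.
have v_new_p : v \notin [:: a; b; c; d] by case/and3P: P => _ /andP[].
have qF w : w \in q -> w != v -> w \notin F.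
  by move=> /qF'; rewrite !inE negb_or negb_and negbK => /andP[_ /orP[/eqP->|]]; rewrite ?eqxx.
case vq : (v \in q); last first.
  apply: (freeF q Pq) => w wq; rewrite inE qF //.
  by apply: contraFneq vq => <-.
have [a' [x [y [z [Q qE]]]]] := P5_isolated_end Pq vq.
have a'a := P5_isolated_neighbour_eq P Q; subst a'.
have b_new : b \notin [:: a; x; y; z].
  have /negP bq : b \notin q by apply/negP => /qF'; rewrite !inE eqxx.
  by apply/negP => bs; apply: bq; rewrite qE inE bs orbT.
have v_new : v \notin [:: a; x; y; z] by case/and3P: Q => _ /andP[].
have Q' : is_P5 e [:: b; a; x; y; z].
  apply: is_P5_swap_head Q b_new _; rewrite /= e_sym.
  by move: P; rewrite is_P5E => /and5P[].
apply: (freeF _ Q') => w; rewrite in_cons => /predU1P[->|ws]; rewrite inE.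
  have bv : b != v by apply: contraNneq v_new_p => <-; rewrite !inE eqxx orbT.
  by have := pFv b; rewrite !inE bv eqxx !orbT => /(_ isT).
apply: qF; first by rewrite qE inE ws orbT.
by apply: contraNneq v_new => <-.
Qed.

End IsolatedVertex.

Theorem lemma3 (T : finType) (e : rel T)
  (e_sym : symmetric e) (e_irr : irreflexive e)
  (V1 V2 : {set T})
  (hdisj : V1 :&: V2 = set0) (hcov : V1 :|: V2 = [set: T])
  (hV1 : P5_free_in e V1) (hV2 : P5_free_in e V2)
  (k : nat) (hk : 1 <= k)
  (hP5 : exists p, is_P5 e p)
  (hcover : forall x : T, exists p, is_P5 e p /\ x \in p)
  (h4 : forall p, is_P5 e p -> 4 <= count (fun x => x \in V2) p)
  (v : T) (hvV2 : v \in V2) (hviso : forall u, u \in V2 -> ~~ e v u)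
  (F : {set T}) (hFV2 : F \subset V2) (hF : P5_free_in e (~: F)) (hvF : v \in F) :
  exists F' : {set T},
    [/\ F' \subset V2, P5_free_in e (~: F'), v \notin F' & #|F'| <= #|F|].
Proof.
have FvS : F :\ v \subset V2 := subset_trans (subsetDl F [set v]) hFV2.
have v_Fv : v \notin F :\ v by rewrite !inE eqxx.
have card_Fv : #|F :\ v| < #|F| by rewrite (cardsD1 v F) hvF.
case: (classic (P5_free_in e (~: (F :\ v)))) => [freeFv | /P5_free_witness [p [Pp pFv]]].
  by exists (F :\ v); split=> //; exact: ltnW.
have vp := P5_free_setD1_mem hF Pp pFv.
have [a [b [c [d [P pE]]]]] := P5_isolated_end e_sym h4 hviso Pp vp.
have [_ bV2 _ _] := P5_isolated_shape h4 hviso P.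
have {}pFv : {subset [:: v; a; b; c; d] <= ~: (F :\ v)} by move=> x; rewrite -pE; exact: pFv.
exists (b |: F :\ v); split.
- by rewrite subUset sub1set bV2.
- exact: (P5_free_isolated_swap e_sym h4 hviso hF P pFv).
- have vb : v != b by case/and3P: P => _ /andP[]; rewrite !inE negb_or => /andP[_ /norP[]].
  by rewrite !inE eqxx (negbTE vb).
- by rewrite cardsU1; case: (b \notin _) => //=; exact: ltnW.
Qed.
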